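(* Let $\Gamma$ be an embedding of $K_{n,n}$ in $S^3$ with vertex sets $V$ and $W$, and let $G \leq \mathrm{TSG}_+(\Gamma)$ be a subgroup isomorphic to $A_4$ or $A_5$. Then every element $g \in G$ satisfies $g(V) = V$ (and hence $g(W) = W$).
   Context: $K_{n,n}$ is the complete bipartite graph with vertex sets $V$, $W$ of $n$ vertices each; every vertex of $V$ is adjacent to every vertex of $W$, and there are no other edges. $\mathrm{TSG}_+(\Gamma)$ is the subgroup of $\mathrm{Aut}(K_{n,n})$ consisting of automorphisms induced by orientation preserving homeomorphisms of $(S^3,\Gamma)$. *)

From HB Require Import structures.
From mathcomp Require Import all_boot all_order all_algebra all_fingroup all_solvable.
From mathcomp Require Import all_classical all_reals all_analysis.
Set Implicit Arguments. Unset Strict Implicit. Unset Printing Implicit Defensive.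
Import Order.TTheory GRing.Theory Num.Theory.
Import numFieldNormedType.Exports.
Local Open Scope classical_set_scope.
Local Open Scope ring_scope.

Section KnnEmbedding.
Variable R : realType.
Variable n : nat.

Definition Knn_vert := ('I_n + 'I_n)%type.

Definition Knn_V : {set Knn_vert} := [set x | is_inl x].
Definition Knn_W : {set Knn_vert} := [set x | ~~ is_inl x].

Definition Knn_adj (x y : Knn_vert) : bool := is_inl x != is_inl y.

Definition Knn_Aut : {set {perm Knn_vert}} :=
  [set s : {perm Knn_vert} | [forall x, forall y, Knn_adj (s x) (s y) == Knn_adj x y]].

Local Notation pt := (matrix R 1 4).
Definition S3 : set pt := [set x | \sum_(i < 4) (x ord0 i) ^+ 2 = 1].

Definition I01 : set R := `[0, 1]%classic.
Definition I01o : set R := `]0, 1[%classic.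

Record Knn_embedding := {
  vpos : Knn_vert -> pt;
  arc : 'I_n -> 'I_n -> R -> pt;
  vpos_S3 : forall x, S3 (vpos x);
  vpos_inj : injective vpos;
  arc_cont : forall v w, {within I01, continuous (arc v w)};
  arc_inj : forall v w, {in I01 &, injective (arc v w)};
  arc_S3 : forall v w, arc v w @` I01 `<=` S3;
  arc_0 : forall v w, arc v w 0 = vpos (inl v);
  arc_1 : forall v w, arc v w 1 = vpos (inr w);
  arc_int_vert : forall v w x, ~ (arc v w @` I01o) (vpos x);
  arc_int_disj : forall v w v' w', (v, w) <> (v', w') ->
      arc v w @` I01o `&` arc v' w' @` I01 = set0
}.

Definition edge_img (G : Knn_embedding) (x y : Knn_vert) : set pt :=
  match x, y with
  | inl v, inr w => arc G v w @` I01
  | inr w, inl v => arc G v w @` I01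
  | _, _ => set0
  end.

Definition homeo_S3 (h : pt -> pt) : Prop :=
  [/\ forall x, S3 x -> S3 (h x), {within S3, continuous h} &
      exists k : pt -> pt, [/\ forall x, S3 x -> S3 (k x),
         {within S3, continuous k},
         forall x, S3 x -> k (h x) = x & forall x, S3 x -> h (k x) = x]].

Definition homotopic_to_id_S3 (h : pt -> pt) : Prop :=
  exists H : R -> pt -> pt,
    [/\ {within [set p : R * pt | I01 p.1 /\ S3 p.2],
           continuous (fun p : R * pt => H p.1 p.2)},
        forall t x, I01 t -> S3 x -> S3 (H t x),
        forall x, S3 x -> H 0 x = x &
        forall x, S3 x -> H 1 x = h x].

Definition or_pres_homeo_S3 (h : pt -> pt) : Prop :=
  homeo_S3 h /\ homotopic_to_id_S3 h.

Definition induced_by (G : Knn_embedding) (h : pt -> pt) (s : {perm Knn_vert}) : Prop :=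
  (forall x, h (vpos G x) = vpos G (s x)) /\
  (forall x y, Knn_adj x y -> h @` edge_img G x y = edge_img G (s x) (s y)).

Definition TSG_plus (G : Knn_embedding) : {set {perm Knn_vert}} :=
  [set s in Knn_Aut | `[< exists h, or_pres_homeo_S3 h /\ induced_by G h s >]].

End KnnEmbedding.

From HB Require Import structures.
From mathcomp Require Import all_boot all_order all_algebra all_fingroup all_solvable.
From mathcomp Require Import all_classical all_reals all_analysis.
Import numFieldNormedType.Exports.
Set Implicit Arguments. Unset Strict Implicit. Unset Printing Implicit Defensive.

(* An automorphism of K_{n,n} either preserves both parts or swaps them, so
   the part-preserving elements of G form a subgroup of index at most 2.
   Neither A_4 (which has no subgroup of order 6) nor A_5 (which is simple)
   has a subgroup of index 2, so every element of G preserves the parts. *)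

Local Open Scope group_scope.

Definition no_index2 (gT : finGroupType) (G : {set gT}) :=
  forall K : {group gT}, K \subset G -> #|G : K| != 2.

Lemma isog_no_index2 (gT hT : finGroupType) (G : {group gT}) (H : {group hT}) :
  G \isog H -> no_index2 H -> no_index2 G.
Proof.
case/isogP=> f injf fG noH K sKG.
by rewrite -(index_injm K injf (subxx G)) fG noH // -fG morphimS.
Qed.

Lemma simple_no_index2 (gT : finGroupType) (G : {group gT}) :
  simple G -> #|G| != 2 -> no_index2 G.
Proof.
move=> /simpleP[_ simG] oG K sKG; apply/eqP=> iK.
case: (simG K (index2_normal sKG iK)) => eqK.
- by move: oG; rewrite -(Lagrange sKG) iK eqK cards1.
- by move: iK; rewrite eqK indexgg.
Qed.

Lemma Alt4_no_index2 (T : finType) : #|T| = 4 -> no_index2 'Alt_T.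
Proof.
move=> oT K sKA; apply/eqP=> iK.
have oA : #|'Alt_T| = 12 by apply: double_inj; rewrite -mul2n card_Alt oT.
have oK : #|K| = 6.
  by apply/eqP; have := Lagrange sKA; rewrite oA iK -(eqn_pmul2r (isT : 0 < 2)) => ->.
have primA : [primitive 'Alt_T, on [set: T] | 'P].
  by apply: (@ntransitive_primitive _ _ _ _ _ 2) => //; have := Alt_trans T; rewrite oT.
case: (prim_trans_norm primA (index2_normal sKA iK)) => [sKC | trK].
- have := subset_leq_card (fintype.subset_trans sKC (aperm_faithful 'Alt_T)).
  by rewrite oK cards1.
- by have := atrans_dvd trK; rewrite cardsT oT oK.
Qed.

Lemma Alt5_no_index2 (T : finType) : 5 <= #|T| -> no_index2 'Alt_T.
Proof.
move=> oT; apply: simple_no_index2; first exact: simple_Alt5.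
have trA : [transitive 'Alt_T, on [set: T] | 'P].
  by apply: ntransitive1 (Alt_trans T); rewrite -subn2 subn_gt0 (leq_trans _ oT).
have := atrans_dvd trA; rewrite cardsT => /(dvdn_leq (cardG_gt0 _)).
by case: eqP => // ->; move: oT; case: #|T| => [|[|[|[|[|]]]]].
Qed.

Lemma index_le2_mul_compl (gT : finGroupType) (G H : {group gT}) :
  H \subset G -> {in G :\: H &, forall x y, x * y \in H} -> #|G : H| <= 2.
Proof.
move=> sHG mulH; have [sGH | /fintype.subsetPn[g Gg notHg]] := boolP (G \subset H).
  by move: sGH; rewrite -indexg_eq1 => /eqP ->.
have GHgV : g^-1 \in G :\: H by rewrite inE !groupV notHg.
have sGHgH : G :\: H \subset g *: H.
  by apply/fintype.subsetP=> y GHy; rewrite mem_lcoset mulH.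
have leGH : #|G| <= #|H| * 2.
  rewrite -(cardsID H G) (finset.setIidPr sHG) muln2 -addnn leq_add2l.
  by rewrite -(card_lcoset H g) subset_leq_card.
by rewrite -(leq_pmul2l (cardG_gt0 H)) Lagrange.
Qed.

Section KnnParts.
Variable n : nat.

Definition Knn_part_pres : {set {perm Knn_vert n}} :=
  [set s : {perm Knn_vert n} | [forall x, is_inl (s x) == is_inl x]].

Fact Knn_part_pres_group_set : group_set Knn_part_pres.
Proof.
apply/group_setP; split; first by rewrite inE; apply/forallP=> x; rewrite perm1.
move=> s t; rewrite !inE => /forallP sP /forallP tP; apply/forallP=> x.
by rewrite permM (eqP (tP _)) (eqP (sP _)).
Qed.
Canonical Knn_part_pres_group := Group Knn_part_pres_group_set.

Lemma Knn_Aut_swap_const (s : {perm Knn_vert n}) x y : s \in Knn_Aut n ->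
  is_inl (s x) (+) is_inl x = is_inl (s y) (+) is_inl y.
Proof.
rewrite inE => /forallP /(_ x) /forallP /(_ y) /eqP; rewrite /Knn_adj.
by case: (is_inl (s x)); case: (is_inl x); case: (is_inl (s y)); case: (is_inl y).
Qed.

Lemma Knn_Aut_swap_all (s : {perm Knn_vert n}) : s \in Knn_Aut n ->
  s \notin Knn_part_pres -> forall x, is_inl (s x) = ~~ is_inl x.
Proof.
move=> sA; rewrite inE negb_forall => /existsP[y swap_y] x.
have := Knn_Aut_swap_const x y sA; move: swap_y.
by case: (is_inl (s y)); case: (is_inl y); case: (is_inl (s x)); case: (is_inl x).
Qed.

Lemma Knn_Aut_mul_swap (s t : {perm Knn_vert n}) :
  s \in Knn_Aut n -> t \in Knn_Aut n ->
  s \notin Knn_part_pres -> t \notin Knn_part_pres -> s * t \in Knn_part_pres.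
Proof.
move=> sA tA swap_s swap_t; rewrite inE; apply/forallP=> x.
by rewrite permM (Knn_Aut_swap_all tA) // (Knn_Aut_swap_all sA) // negbK.
Qed.

Lemma Knn_part_pres_imset (s : {perm Knn_vert n}) : s \in Knn_part_pres ->
  s @: Knn_V n = Knn_V n /\ s @: Knn_W n = Knn_W n.
Proof.
rewrite inE => /forallP sP.
by split; apply/eqP; rewrite eqEcard card_imset ?leqnn ?andbT //;
  try exact: perm_inj; apply/fintype.subsetP=> _ /imsetP[x + ->]; rewrite !inE (eqP (sP x)).
Qed.

Lemma TSG_plus_subset_Aut (R : realType) (Gam : Knn_embedding R n) :
  TSG_plus Gam \subset Knn_Aut n.
Proof. by apply/fintype.subsetP=> s; rewrite inE => /andP[]. Qed.

End KnnParts.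

Theorem lemma1 (R : realType) (n : nat) (Gam : Knn_embedding R n)
  (G : {group {perm Knn_vert n}}) :
  G \subset TSG_plus Gam ->
  (G \isog 'Alt_('I_4) \/ G \isog 'Alt_('I_5)) ->
  forall g, g \in G -> (g @: Knn_V n = Knn_V n /\ g @: Knn_W n = Knn_W n).
Proof.
move=> sGT isoG g Gg.
have sGA := fintype.subset_trans sGT (TSG_plus_subset_Aut Gam).
set H := (G :&: Knn_part_pres n)%G.
have sHG : H \subset G by rewrite subsetIl.
have leGH : #|G : H| <= 2.
  apply: index_le2_mul_compl => // x y /setDP[Gx notHx] /setDP[Gy notHy].
  have [swap_x swap_y] : x \notin Knn_part_pres n /\ y \notin Knn_part_pres n.
    by rewrite !finset.in_setI Gx Gy in notHx notHy.
  have [Ax Ay] := (fintype.subsetP sGA x Gx, fintype.subsetP sGA y Gy).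
  by rewrite finset.in_setI groupM // Knn_Aut_mul_swap.
have noG : no_index2 G.
  by case: isoG => /isog_no_index2; apply;
    [apply: Alt4_no_index2 | apply: Alt5_no_index2]; rewrite card_ord.
have indexGH : #|G : H| = 1%N.
  by move: leGH (noG H sHG) (indexg_gt0 G H); case: #|G : H| => [|[|[]]].
have : G \subset H by rewrite -indexg_eq1 indexGH.
rewrite finset.subsetI => /andP[_ /fintype.subsetP/(_ g Gg)].
exact: Knn_part_pres_imset.
Qed.
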